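(* Suppose $\operatorname{tr}\big((I-\widehat\Pi)\Pi^*\big)\le\delta^2$ for some $\delta\in[0,1)$. Then for every $x\in\mathbb R^d$, $$|\Pi^*x|\le|\widehat\Pi^{1/2}x|+\delta|x|.$$
   Context: $\Pi^*$ is the orthogonal projector onto an $m^*$-dimensional subspace of $\mathbb R^d$. $I$ is the $d\times d$ identity, $|\cdot|$ the Euclidean norm, $A\preceq B$ means $B-A$ is positive semidefinite. Let $\hat\beta_1,\dots,\hat\beta_L\in\mathbb R^d$ be arbitrary vectors, $\mathcal A_{m^*}=\{\Pi\in\mathbb R^{d\times d}:\Pi=\Pi^\top,\ 0\preceq\Pi\preceq I,\ \operatorname{tr}\Pi\le m^*\}$, and let $\widehat\Pi$ be a minimizer over $\Pi\in\mathcal A_{m^*}$ of $\max_\ell\hat\beta_\ell^\top(I-\Pi)\hat\beta_\ell$; $\widehat\Pi^{1/2}$ is its positive semidefinite square root. *)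

From HB Require Import structures.
From mathcomp Require Import all_boot all_order all_algebra.
Set Implicit Arguments. Unset Strict Implicit. Unset Printing Implicit Defensive.
Import Order.TTheory GRing.Theory Num.Theory.
Local Open Scope ring_scope.

Section Defs.
Variable R : rcfType.

Definition qform (d : nat) (A : 'M[R]_d) (x : 'cV[R]_d) : R := (x^T *m A *m x) 0 0.

Definition enorm (d : nat) (x : 'cV[R]_d) : R := Num.sqrt ((x^T *m x) 0 0).

Definition psd (d : nat) (A : 'M[R]_d) : Prop :=
  A^T = A /\ forall x : 'cV[R]_d, 0 <= qform A x.

Definition loewner_le (d : nat) (A B : 'M[R]_d) : Prop := psd (B - A).

Definition orth_proj (d m : nat) (P : 'M[R]_d) : Prop :=
  P^T = P /\ P *m P = P /\ \rank P = m.

Definition in_Aset (d m : nat) (P : 'M[R]_d) : Prop :=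
  P^T = P /\ loewner_le 0 P /\ loewner_le P 1%:M /\ \tr P <= m%:R.

(* objective max_l beta_l^T (I - P) beta_l (values are nonnegative on A_m) *)
Definition objective (d L : nat) (beta : 'I_L -> 'cV[R]_d) (P : 'M[R]_d) : R :=
  \big[Num.max/0]_(l < L) qform (1%:M - P) (beta l).

Definition is_minimizer (d m L : nat) (beta : 'I_L -> 'cV[R]_d) (P : 'M[R]_d) : Prop :=
  in_Aset m P /\ forall Q : 'M[R]_d, in_Aset m Q -> objective beta P <= objective beta Q.

Definition is_psd_sqrt (d : nat) (S P : 'M[R]_d) : Prop := psd S /\ S *m S = P.
End Defs.

From HB Require Import structures.
From mathcomp Require Import all_boot all_order all_algebra.
From mathcomp Require Import ring lra.
Set Implicit Arguments. Unset Strict Implicit. Unset Printing Implicit Defensive.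
Import Order.TTheory GRing.Theory Num.Theory.
Local Open Scope ring_scope.

(* With A := I - Pihat, split Pistar x = Pistar (Pihat x) + (Pistar A) x.
   Since Pihat - Pihat^2 = S (I - Pihat) S >= 0 for S := Pihat^(1/2), the first
   term has norm at most |Pihat x| <= |S x|.  For the second, the Frobenius
   bound gives |Pistar A x|^2 <= tr(A^2 Pistar) |x|^2, and A^2 <= A gives
   tr(A^2 Pistar) <= tr(A Pistar) <= delta^2. *)

Lemma sqr_sum_mul_le (R : realDomainType) (I : finType) (u v : I -> R) :
  (\sum_i u i * v i) ^+ 2 <= (\sum_i u i ^+ 2) * (\sum_i v i ^+ 2).
Proof.
set a := \sum_i u i ^+ 2; set b := \sum_i u i * v i; set c := \sum_i v i ^+ 2.
have c_ge0 : 0 <= c by apply: sumr_ge0 => i _; exact: sqr_ge0.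
have c_discr_ge0 : 0 <= c * (a * c - b ^+ 2).
  have -> : c * (a * c - b ^+ 2) = \sum_i (c * u i - b * v i) ^+ 2.
    rewrite (eq_bigr (fun i => c ^+ 2 * u i ^+ 2 - (2 * c * b) * (u i * v i)
                                 + b ^+ 2 * v i ^+ 2)); last by move=> i _; ring.
    by rewrite big_split sumrB /= -!mulr_sumr -/a -/b -/c; ring.
  by apply: sumr_ge0 => i _; exact: sqr_ge0.
have [c0 | c_neq0] := eqVneq c 0; last first.
  have c_gt0 : 0 < c by rewrite lt_def c_neq0.
  by rewrite -subr_ge0 -(pmulr_rge0 _ c_gt0).
have v0 i : v i = 0.
  apply/eqP; rewrite -sqrf_eq0; apply/eqP.
  by apply: (psumr_eq0P (fun j _ => sqr_ge0 (v j)) c0).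
have -> : b = 0 by rewrite /b big1 // => i _; rewrite v0 mulr0.
by rewrite c0 expr0n mulr0.
Qed.

Section Euclidean.
Variables (R : rcfType) (n : nat).
Implicit Types (u v x : 'cV[R]_n) (A B C M P : 'M[R]_n).

Definition dot u v : R := (u^T *m v) 0 0.

Lemma dotE u v : dot u v = \sum_i u i 0 * v i 0.
Proof. by rewrite /dot !mxE; apply: eq_bigr => i _; rewrite !mxE. Qed.

Lemma dotC u v : dot u v = dot v u.
Proof. by rewrite !dotE; apply: eq_bigr => i _; rewrite mulrC. Qed.

Lemma dotDl u v x : dot (u + v) x = dot u x + dot v x.
Proof. by rewrite /dot linearD /= mulmxDl mxE. Qed.

Lemma dotDr u v x : dot x (u + v) = dot x u + dot x v.
Proof. by rewrite ![dot x _]dotC dotDl. Qed.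

Lemma dot_ge0 u : 0 <= dot u u.
Proof. by rewrite dotE; apply: sumr_ge0 => i _; rewrite -expr2 sqr_ge0. Qed.

Lemma dot_cauchy_schwarz u v : dot u v ^+ 2 <= dot u u * dot v v.
Proof.
rewrite !dotE; under [in X in _ <= X * _]eq_bigr do rewrite -expr2.
under [in X in _ <= _ * X]eq_bigr do rewrite -expr2.
exact: sqr_sum_mul_le.
Qed.

Lemma enormE u : enorm u = Num.sqrt (dot u u).
Proof. by []. Qed.

Lemma enorm_ge0 u : 0 <= enorm u.
Proof. exact: sqrtr_ge0. Qed.

Lemma ler_enormD u v : enorm (u + v) <= enorm u + enorm v.
Proof.
have dot_le : dot u v <= enorm u * enorm v.
  rewrite -sqrtrM ?dot_ge0 //; apply: le_trans (ler_norm _) _.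
  by rewrite -sqrtr_sqr ler_wsqrtr // dot_cauchy_schwarz.
rewrite -[leRHS]ger0_norm ?addr_ge0 ?enorm_ge0 // -sqrtr_sqr !enormE.
rewrite ler_wsqrtr // sqrrD !sqr_sqrtr ?dot_ge0 // -!enormE.
rewrite dotDl !dotDr [dot v u]dotC; lra.
Qed.

Lemma qformB A B x : qform (A - B) x = qform A x - qform B x.
Proof. by rewrite /qform mulmxBr mulmxBl !mxE. Qed.

Lemma qform_mulmx A B x : qform A (B *m x) = qform (B^T *m A *m B) x.
Proof. by rewrite /qform trmx_mul !mulmxA. Qed.

Lemma enorm_mulmx B x : enorm (B *m x) = Num.sqrt (qform (B^T *m B) x).
Proof. by rewrite /enorm /qform trmx_mul !mulmxA. Qed.

Lemma psd1 : psd (1%:M : 'M[R]_n).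
Proof. by split=> [|x]; rewrite ?trmx1 // /qform mulmx1 dot_ge0. Qed.

Lemma psd_congr A B : psd A -> psd (B^T *m A *m B).
Proof.
move=> [AT A_ge0]; split=> [|x]; first by rewrite !trmx_mul trmxK AT mulmxA.
by rewrite -qform_mulmx.
Qed.

Lemma mxtrace_congr_ge0 A B : psd A -> 0 <= \tr (B^T *m A *m B).
Proof.
move=> [_ A_ge0]; apply: sumr_ge0 => i _.
suff -> : (B^T *m A *m B) i i = qform A (col i B) by [].
rewrite /qform !mxE; apply: eq_bigr => k _; rewrite !mxE; congr (_ * _).
by apply: eq_bigr => l _; rewrite !mxE.
Qed.

Lemma enorm_mulmx_le B C x :
  loewner_le (C^T *m C) (B^T *m B) -> enorm (C *m x) <= enorm (B *m x).
Proof.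
by move=> [_ BC_ge0]; rewrite !enorm_mulmx ler_wsqrtr // -subr_ge0 -qformB.
Qed.

Lemma enorm_proj_le P x : P^T = P -> P *m P = P -> enorm (P *m x) <= enorm x.
Proof.
move=> PT PP; rewrite -{2}(mul1mx x).
apply: enorm_mulmx_le; rewrite /loewner_le.
have -> : 1%:M^T *m 1%:M - P^T *m P = (1%:M - P)^T *m 1%:M *m (1%:M - P).
  rewrite trmx1 [(_ - P)^T]raddfB /= trmx1 PT !mulmx1 PP.
  by rewrite mulmxBl mul1mx mulmxBr mulmx1 PP subrr subr0.
exact: psd_congr _ psd1.
Qed.

Lemma enorm_mulmx_le_frobenius M x :
  enorm (M *m x) <= Num.sqrt (\tr (M *m M^T)) * enorm x.
Proof.
have tr_ge0 : 0 <= \tr (M *m M^T).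
  by have := mxtrace_congr_ge0 M^T psd1; rewrite trmxK mulmx1.
rewrite !enormE -sqrtrM // ler_wsqrtr // dotE /mxtrace mulr_suml.
apply: ler_sum => i _; rewrite -expr2 dotE.
have -> : (M *m x) i 0 = \sum_j M i j * x j 0 by rewrite mxE.
have -> : (M *m M^T) i i = \sum_j M i j ^+ 2.
  by rewrite mxE; apply: eq_bigr => j _; rewrite mxE expr2.
under [in X in _ <= _ * X]eq_bigr do rewrite -expr2.
exact: sqr_sum_mul_le.
Qed.

Lemma ler_mxtrace_proj A B P :
  P^T = P -> P *m P = P -> loewner_le A B -> \tr (A *m P) <= \tr (B *m P).
Proof.
move=> PT PP BA_ge0; rewrite -subr_ge0 -linearB /= -mulmxBl.
have -> : (B - A) *m P = (B - A) *m P *m P by rewrite -mulmxA PP.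
by rewrite mxtrace_mulC mulmxA -{1}PT; apply: mxtrace_congr_ge0.
Qed.

Section PsdSqrt.
Variables H S : 'M[R]_n.
Hypotheses (SH : is_psd_sqrt S H) (H_le1 : loewner_le H 1%:M).

Lemma psd_sqrt_trmx : H^T = H.
Proof. by case: SH => [[ST _] SS]; rewrite -SS trmx_mul ST. Qed.

Lemma psd_sub_sqr : psd (H - H *m H).
Proof.
case: SH => [[ST _] SS].
have -> : H - H *m H = S^T *m (1%:M - H) *m S.
  by rewrite ST mulmxBr mulmx1 mulmxBl SS -SS !mulmxA.
exact: psd_congr.
Qed.

Lemma enorm_mulmx_le_sqrt x : enorm (H *m x) <= enorm (S *m x).
Proof.
case: SH => [[ST _] SS]; apply: enorm_mulmx_le.
by rewrite /loewner_le ST SS psd_sqrt_trmx; exact: psd_sub_sqr.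
Qed.

Lemma loewner_le_sqr_compl : loewner_le ((1%:M - H) *m (1%:M - H)) (1%:M - H).
Proof.
rewrite /loewner_le.
have -> : 1%:M - H - (1%:M - H) *m (1%:M - H) = H - H *m H.
  by rewrite mulmxBl mul1mx mulmxBr mulmx1 subKr.
exact: psd_sub_sqr.
Qed.

End PsdSqrt.

End Euclidean.

Theorem lemma2 (R : rcfType) (d mstar L : nat) (Pistar : 'M[R]_d)
  (beta : 'I_L -> 'cV[R]_d) (Pihat Pihat_sqrt : 'M[R]_d) (delta : R) :
  (0 < L)%N ->
  orth_proj mstar Pistar ->
  is_minimizer mstar beta Pihat ->
  is_psd_sqrt Pihat_sqrt Pihat ->
  0 <= delta -> delta < 1 ->
  \tr ((1%:M - Pihat) *m Pistar) <= delta ^+ 2 ->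
  forall x : 'cV[R]_d,
    enorm (Pistar *m x) <= enorm (Pihat_sqrt *m x) + delta * enorm x.
Proof.
move=> _ [PT [PP _]] [[_ [_ [H_le1 _]]] _] SH delta_ge0 _ tr_le x.
set A := 1%:M - Pihat in tr_le *.
have AT : A^T = A by rewrite /A raddfB /= trmx1 (psd_sqrt_trmx SH).
have -> : Pistar *m x = Pistar *m (Pihat *m x) + Pistar *m A *m x.
  by rewrite !mulmxA -mulmxDl -mulmxDr addrC subrK mulmx1.
apply: le_trans (ler_enormD _ _) _; apply: lerD.
  exact: le_trans (enorm_proj_le _ PT PP) (enorm_mulmx_le_sqrt SH H_le1 x).
apply: le_trans (enorm_mulmx_le_frobenius _ _) (ler_wpM2r (enorm_ge0 _) _).
rewrite -(ger0_norm delta_ge0) -sqrtr_sqr ler_wsqrtr //; apply: le_trans tr_le.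
have -> : \tr (Pistar *m A *m (Pistar *m A)^T) = \tr (A *m A *m Pistar).
  by rewrite trmx_mul AT PT mulmxA mxtrace_mulC !mulmxA PP -mulmxA mxtrace_mulC.
exact: ler_mxtrace_proj PT PP (loewner_le_sqr_compl SH H_le1).
Qed.
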